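(* Let $S\ge 2$, $T\ge 3$, $\mathcal S=\{1,\dots,S\}$, and let $\mathbf x,\mathbf y$ be two contingency tables on $\mathcal S^T$ lying in the same fiber of the toric homogeneous Markov chain (THMC) model, and put $z^t_{ij}=x^t_{ij}-y^t_{ij}$. Suppose that for some times $1\le t<t'\le T$ and states $s_t,s_{t+1},\dots,s_{t'}\in\mathcal S$ we have $z^{u}_{s_u s_{u+1}}>0$ for all $u=t,\dots,t'-1$ (i.e. $\mathbf x$ dominates $\mathbf y$ in the partial path $t\!:\!s_t s_{t+1}\cdots s_{t'}$). Then, by applying to $\mathbf x$ a finite sequence of crossing path swappings (each step producing again a table with nonnegative entries), one can transform $\mathbf x$ into a table $\tilde{\mathbf x}$ such that $\tilde{\mathbf x}$ contains (with positive frequency) a path $\omega=(\omega_1,\dots,\omega_T)$ with $\omega_u=s_u$ for all $u=t,\dots,t'$.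
   Context: A path is $\omega=(\omega_1,\dots,\omega_T)\in\mathcal S^T$. A contingency table is a function $\mathbf x:\mathcal S^T\to\mathbb Z_{\ge0}$ (a multiset of $N=\sum_\omega x(\omega)$ paths). For $1\le t\le T-1$ and $i,j\in\mathcal S$, $x^t_{ij}$ is the number of paths (with multiplicity) in $\mathbf x$ with $\omega_t=i,\omega_{t+1}=j$; $x^1_i$ is the number of paths with $\omega_1=i$; $x^+_{ij}=\sum_{t=1}^{T-1}x^t_{ij}$. The sufficient statistic of the THMC model is $\mathbf b(\mathbf x)=(\{x^1_i\}_{i\in\mathcal S},\{x^+_{ij}\}_{i,j\in\mathcal S})$, and the fiber of $\mathbf b$ is the set of all tables $\mathbf x$ with $\mathbf b(\mathbf x)=\mathbf b$. Crossing path swapping: if two paths $\omega=(s_1,\dots,s_T)$ and $\omega'=(s'_1,\dots,s'_T)$ satisfy $s_t=s'_t$ for some $t$, replacing them in the table by $\tilde\omega=(s_1,\dots,s_t,s'_{t+1},\dots,s'_T)$ and $\tilde\omega'=(s'_1,\dots,s'_t,s_{t+1},\dots,s_T)$; equivalently adding the move $e_{\tilde\omega}+e_{\tilde\omega'}-e_\omega-e_{\omega'}$ to a table containing $\omega$ and $\omega'$ (here $e_\omega$ is the indicator table of the single path $\omega$). *)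

From mathcomp Require Import all_boot all_order all_algebra.
Set Implicit Arguments. Unset Strict Implicit. Unset Printing Implicit Defensive.
Import GRing.Theory Num.Theory.

(* States: 'I_S (= {1..S} shifted to {0..S-1}); times: 'I_T, 0-based,
   i.e. paper time u corresponds to index u-1. *)
Definition spath (S T : nat) := {ffun 'I_T -> 'I_S}.

Definition table (S T : nat) := {ffun spath S T -> nat}.

Definition path_at (S T : nat) (w : spath S T) (t : nat) (s : 'I_S) : bool :=
  [exists u : 'I_T, (val u == t) && (w u == s)].

Definition trans_count (S T : nat) (x : table S T) (t : nat) (i j : 'I_S) : nat :=
  \sum_(w : spath S T) x w * (path_at w t i && path_at w t.+1 j).

Definition init_count (S T : nat) (x : table S T) (i : 'I_S) : nat :=
  \sum_(w : spath S T) x w * path_at w 0 i.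

Definition plus_count (S T : nat) (x : table S T) (i j : 'I_S) : nat :=
  \sum_(t < T.-1) trans_count x t i j.

Definition same_fiber (S T : nat) (x y : table S T) : Prop :=
  (forall i, init_count x i = init_count y i) /\
  (forall i j, plus_count x i j = plus_count y i j).

Definition swap_path (S T : nat) (w w' : spath S T) (t : 'I_T) : spath S T :=
  [ffun u : 'I_T => if (u <= t)%N then w u else w' u].

(* one crossing path swapping step: x' = x + e_{~w} + e_{~w'} - e_w - e_{w'},
   where w, w' agree at time t; x' being a table (nat-valued) encodes
   nonnegativity of the result. *)
Definition swap_step (S T : nat) (x x' : table S T) : Prop :=
  exists (w w' : spath S T) (t : 'I_T),
    w t = w' t /\
    forall v : spath S T,
      ((x' v)%:Z = (x v)%:Z + (swap_path w w' t == v)%:Z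
                   + (swap_path w' w t == v)%:Z
                   - (w == v)%:Z - (w' == v)%:Z)%R.

Inductive swap_reachable (S T : nat) : table S T -> table S T -> Prop :=
  | swap_refl x : swap_reachable x x
  | swap_trans x x' x'' : swap_step x x' -> swap_reachable x' x'' ->
                          swap_reachable x x''.

(* A dominated transition u : s_u -> s_(u+1) is used by at least one path of x.
   Given a path of x that already follows s on [t, u], take a path of x using the
   transition at u; both are in state s_u at time u, so crossing them there
   produces a path following s on [t, u+1].  Swappings preserve every transition
   count, so the domination hypotheses survive each swap and the argument
   iterates up to t'. *)
From mathcomp Require Import all_boot all_order all_algebra zify.
Set Implicit Arguments. Unset Strict Implicit. Unset Printing Implicit Defensive.

Section Paths.

Variables S T : nat.
Implicit Types (w : spath S T) (x : table S T).

Lemma path_atE w u (hu : (u < T)%N) i : path_at w u i = (w (Ordinal hu) == i).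
Proof.
apply/existsP/idP => [[v /andP[/eqP ev /eqP <-]]|/eqP <-].
  by rewrite (_ : Ordinal hu = v) //; apply: val_inj.
by exists (Ordinal hu); rewrite !eqxx.
Qed.

Lemma path_at_ltT w u i : path_at w u i -> (u < T)%N.
Proof. by case/existsP=> v /andP[/eqP <- _]; exact: ltn_ord. Qed.

Lemma path_at_swap_le w w' (t : 'I_T) u i :
  (u <= t)%N -> path_at (swap_path w w' t) u i = path_at w u i.
Proof.
move=> hut; apply: eq_existsb => v; rewrite ffunE.
by case: (eqVneq (val v) u) => [->|]; rewrite ?hut.
Qed.

Lemma path_at_swap_ge w w' (t : 'I_T) u i : w t = w' t ->
  (t <= u)%N -> path_at (swap_path w w' t) u i = path_at w' u i.
Proof.
move=> ewt htu; apply: eq_existsb => v; rewrite ffunE.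
case: (eqVneq (val v) u) => [evu|] //=.
case: leqP => // hvt; suff -> : v = t by rewrite ewt.
by apply: val_inj; apply/eqP; rewrite eqn_leq hvt evu.
Qed.

Definition trans_at w u (i j : 'I_S) : nat := path_at w u i && path_at w u.+1 j.

Lemma trans_at_swap w w' (t : 'I_T) u i j : w t = w' t ->
  trans_at (swap_path w w' t) u i j + trans_at (swap_path w' w t) u i j
  = trans_at w u i j + trans_at w' u i j.
Proof.
move=> ewt; rewrite /trans_at; case: (leqP u.+1 t) => hut.
  by rewrite !path_at_swap_le // ltnW.
by rewrite !path_at_swap_ge // 1?addnC // ltnW.
Qed.

Lemma sum_indicator (a : spath S T) (F : spath S T -> nat) :
  \sum_w (a == w) * F w = F a.
Proof.
rewrite (bigD1 a) //= eqxx mul1n big1 ?addn0 // => w.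
by rewrite eq_sym => /negbTE ->.
Qed.

Lemma swap_step_trans_count x x' u i j :
  swap_step x x' -> trans_count x' u i j = trans_count x u i j.
Proof.
case=> w [w' [t [ewt Hx']]].
set sw := swap_path w w' t; set sw' := swap_path w' w t.
have balance v : x' v + (w == v) + (w' == v) = x v + (sw == v) + (sw' == v).
  by move: (Hx' v); case: (w == v); case: (w' == v); case: (sw == v);
     case: (sw' == v) => /=; lia.
pose c v := trans_at v u i j.
have swap_c : c sw + c sw' = c w + c w' by apply: trans_at_swap.
apply/eqP; rewrite -(eqn_add2r (c w + c w')) -{2}swap_c.
rewrite /trans_count -(sum_indicator w c) -(sum_indicator w' c).
rewrite -(sum_indicator sw c) -(sum_indicator sw' c) !addnA -!big_split /=.
by apply/eqP/eq_bigr => v _; rewrite -!mulnDl balance.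
Qed.

Lemma swap_reachable_trans_count x x' u i j :
  swap_reachable x x' -> trans_count x' u i j = trans_count x u i j.
Proof. by elim=> // {}x x1 x2 hstep _ IH; rewrite IH (swap_step_trans_count _ _ _ hstep). Qed.

Lemma swap_reachable_trans x1 x2 x3 :
  swap_reachable x1 x2 -> swap_reachable x2 x3 -> swap_reachable x1 x3.
Proof. by elim=> // {}x1 y1 y2 hstep _ IH /IH; apply: swap_trans. Qed.

Lemma trans_count_gt0 x u i j : (0 < trans_count x u i j)%N ->
  exists2 w, (0 < x w)%N & path_at w u i && path_at w u.+1 j.
Proof.
case: (pickP [pred w | 0 < x w * trans_at w u i j]%N) => [w|none].
  by rewrite /= muln_gt0 lt0b => /andP[xw tw] _; exists w.
rewrite /trans_count big1 // => w _; apply/eqP; rewrite -leqn0 leqNgt.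
by have /= -> := none w.
Qed.

Lemma swap_step_exists x w w' (t : 'I_T) : w t = w' t -> w != w' ->
  (0 < x w)%N -> (0 < x w')%N ->
  exists2 x', swap_step x x' & (0 < x' (swap_path w w' t))%N.
Proof.
move=> ewt neww' xw xw'; set sw := swap_path w w' t; set sw' := swap_path w' w t.
have not_both v : (w == v) && (w' == v) = false.
  by apply/negbTE; apply: contra neww' => /andP[/eqP -> /eqP ->].
have supp v : ((w == v) || (w' == v)) -> (0 < x v)%N.
  by case/orP=> /eqP <-.
exists [ffun v => x v + (sw == v) + (sw' == v) - (w == v) - (w' == v)]%N.
  exists w, w', t; split=> // v; rewrite ffunE.
  by move: (not_both v) (supp v); case: (w == v); case: (w' == v);
     case: (sw == v); case: (sw' == v) => /=; lia.
by rewrite ffunE eqxx; move: (not_both sw) (supp sw);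
   case: (w == sw); case: (w' == sw); case: (sw' == sw) => /=; lia.
Qed.

Definition follows w (s : nat -> 'I_S) t n :=
  forall u, (t <= u <= n)%N -> path_at w u (s u).

Lemma follows_refl w s t : path_at w t (s t) -> follows w s t t.
Proof. by move=> wt u; rewrite -eqn_leq => /eqP <-. Qed.

Lemma followsS w s t n :
  follows w s t n -> path_at w n.+1 (s n.+1) -> follows w s t n.+1.
Proof.
move=> wpath wn1 u /andP[tu]; rewrite leq_eqVlt ltnS => /orP[/eqP -> //|un].
by apply: wpath; rewrite tu.
Qed.

Lemma extend_partial_path x s t n w : (t <= n)%N ->
  (0 < x w)%N -> follows w s t n -> (0 < trans_count x n (s n) (s n.+1))%N ->
  exists2 x', swap_reachable x x' & exists2 w', (0 < x' w')%N & follows w' s t n.+1.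
Proof.
move=> tn xw wpath /trans_count_gt0 [w' xw' /andP[w'n w'n1]].
case: (eqVneq w w') => [eww'|neww'].
  exists x; first exact: swap_refl.
  by exists w => //; apply: followsS => //; rewrite eww'.
have nT : (n < T)%N := path_at_ltT w'n.
have ewn : w (Ordinal nT) = w' (Ordinal nT).
  by move: (wpath n) w'n; rewrite tn leqnn !(path_atE _ nT) => /(_ isT) /eqP -> /eqP.
have [x' hstep x'sw] := swap_step_exists ewn neww' xw xw'.
exists x'; first exact: swap_trans hstep (swap_refl _).
exists (swap_path w w' (Ordinal nT)) => //; apply: followsS.
  by move=> u hu; rewrite path_at_swap_le ?wpath //; case/andP: hu.
by rewrite path_at_swap_ge.
Qed.

Lemma swap_reachable_follows x s t k :
  (forall u, (t <= u <= t + k)%N -> (0 < trans_count x u (s u) (s u.+1))%N) ->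
  exists2 x', swap_reachable x x' & exists2 w, (0 < x' w)%N & follows w s t (t + k).+1.
Proof.
elim: k => [|k IH] hpos.
  have /hpos/trans_count_gt0 [w xw /andP[wt wt1]] : (t <= t <= t + 0)%N.
    by rewrite addn0 leqnn.
  exists x; first exact: swap_refl.
  by exists w => //; rewrite addn0; apply: followsS => //; apply: follows_refl.
have [|x1 hx1 [w xw wpath]] := IH.
  by move=> u /andP[tu uk]; apply: hpos; rewrite tu addnS ltnW.
have hpos1 : (0 < trans_count x1 (t + k).+1 (s (t + k).+1) (s (t + k).+2))%N.
  by rewrite (swap_reachable_trans_count _ _ _ hx1) hpos //; lia.
have [x2 hx2 [w2 xw2 w2path]] := extend_partial_path (leqW (leq_addr k t)) xw wpath hpos1.
exists x2; first exact: swap_reachable_trans hx1 hx2.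
by exists w2; rewrite // addnS.
Qed.

End Paths.

Theorem lemma2 (S T : nat) (hS : (2 <= S)%N) (hT : (3 <= T)%N)
  (x y : table S T) (hxy : same_fiber x y)
  (t t' : nat) (htt' : (t < t')%N) (ht' : (t' < T)%N) (s : nat -> 'I_S)
  (hdom : forall u : nat, (t <= u < t')%N ->
            (trans_count y u (s u) (s u.+1) < trans_count x u (s u) (s u.+1))%N) :
  exists xt : table S T, swap_reachable x xt /\
    exists w : spath S T, (0 < xt w)%N /\
      forall u : nat, (t <= u <= t')%N -> path_at w u (s u).
Proof.
have ht'E : t' = (t + (t' - t).-1).+1 by lia.
have [|xt hxt [w xtw wpath]] := @swap_reachable_follows _ _ x s t (t' - t).-1.
  by move=> u hu; apply: leq_ltn_trans (hdom u _); lia.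
by exists xt; split=> //; exists w; split=> //; rewrite ht'E.
Qed.
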